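(* Let $K$ be a ring with unit and let $M\subseteq M_n(K)$ be a monoid (under matrix multiplication, containing the identity) consisting of block upper triangular matrices of the form $\begin{pmatrix} A & B\\ 0 & C\end{pmatrix}$ with $A\in M_m(K)$, $C\in M_r(K)$, $B\in M_{m,r}(K)$, $m+r=n$. Let $\varphi\colon M\to M_m(K)\times M_r(K)$ be the projection $\begin{pmatrix} A & B\\ 0 & C\end{pmatrix}\mapsto (A,C)$ to the diagonal blocks, and set $N=\varphi(M)$. Then for all $n_1,n_2\in N$, the monoid $\mathrm{tr}_{\varphi}(n_1,n_2)$ embeds (via an injective monoid homomorphism) in the additive group $M_{m,r}(K)$ of $m\times r$ matrices over $K$.
   Context: For a monoid homomorphism $\varphi\colon M\to N$ and $(n_1,n_2)\in N\times N$, the trace $\mathrm{tr}_{\varphi}(n_1,n_2)$ is the quotient of the submonoid $\{m\in M\mid n_1\varphi(m)=n_1,\ \varphi(m)n_2=n_2\}$ of $M$ by the congruence $\equiv$ defined by $m\equiv m'$ if and only if $m_1mm_2=m_1m'm_2$ for all $m_1\in\varphi^{-1}(n_1)$ and all $m_2\in\varphi^{-1}(n_2)$. Here $N=\varphi(M)$ is a submonoid of the product monoid $M_m(K)\times M_r(K)$. *)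

From HB Require Import structures.
From mathcomp Require Import all_boot all_order all_algebra.
Set Implicit Arguments. Unset Strict Implicit. Unset Printing Implicit Defensive.
Import GRing.Theory.
Local Open Scope ring_scope.

Definition block_ut (K : pzRingType) (m r : nat) (x : 'M[K]_(m + r)) : Prop :=
  dlsubmx x = 0.

Definition phi (K : pzRingType) (m r : nat) (x : 'M[K]_(m + r))
  : 'M[K]_m * 'M[K]_r := (ulsubmx x, drsubmx x).

Definition pmul (K : pzRingType) (m r : nat) (a b : 'M[K]_m * 'M[K]_r)
  : 'M[K]_m * 'M[K]_r := (a.1 *m b.1, a.2 *m b.2).

Definition in_image (K : pzRingType) (m r : nat) (M : 'M[K]_(m + r) -> Prop)
  (n : 'M[K]_m * 'M[K]_r) : Prop := exists x, M x /\ phi x = n.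

Definition trace_sub (K : pzRingType) (m r : nat) (M : 'M[K]_(m + r) -> Prop)
  (n1 n2 : 'M[K]_m * 'M[K]_r) (x : 'M[K]_(m + r)) : Prop :=
  M x /\ pmul n1 (phi x) = n1 /\ pmul (phi x) n2 = n2.

(* the congruence defining tr_phi(n1,n2) *)
Definition trace_equiv (K : pzRingType) (m r : nat) (M : 'M[K]_(m + r) -> Prop)
  (n1 n2 : 'M[K]_m * 'M[K]_r) (x y : 'M[K]_(m + r)) : Prop :=
  forall m1 m2, M m1 -> phi m1 = n1 -> M m2 -> phi m2 = n2 ->
    m1 *m x *m m2 = m1 *m y *m m2.

From HB Require Import structures.
From mathcomp Require Import all_boot all_order all_algebra.
Import GRing.Theory.
Set Implicit Arguments. Unset Strict Implicit.
Local Open Scope ring_scope.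

(* For x in the trace submonoid, n1 = (A1, C1) and n2 = (A2, C2), the product
   m1 x m2 with phi m1 = n1 and phi m2 = n2 has diagonal blocks independent of x
   and upper right block A1 B2 + A1 B C2 + B1 C2, where B, B1, B2 are the upper
   right blocks of x, m1, m2.  So x is determined up to the congruence by A1 B C2, and the
   stabiliser conditions A1 A = A1, C C2 = C2 make x |-> A1 B C2 additive. *)

Section BlockUpperTriangular.
Variables (K : pzRingType) (m r : nat).
Implicit Types x y : 'M[K]_(m + r).

Lemma block_utE x :
  block_ut x -> x = block_mx (ulsubmx x) (ursubmx x) 0 (drsubmx x).
Proof. by move=> ux; rewrite -{1}[x]submxK ux. Qed.

Lemma mul_block_ut x y : block_ut x -> block_ut y ->
  x *m y = block_mx (ulsubmx x *m ulsubmx y)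
                    (ulsubmx x *m ursubmx y + ursubmx x *m drsubmx y) 0
                    (drsubmx x *m drsubmx y).
Proof.
move=> ux uy; rewrite {1}(block_utE ux) {1}(block_utE uy) mulmx_block.
by rewrite !mul0mx !mulmx0 !addr0 add0r.
Qed.

Lemma block_utM x y : block_ut x -> block_ut y -> block_ut (x *m y).
Proof. by move=> ux uy; rewrite /block_ut (mul_block_ut ux uy) block_mxKdl. Qed.

Definition trace_coord (A : 'M[K]_m) (C : 'M[K]_r) x : 'M[K]_(m, r) :=
  A *m ursubmx x *m C.

Lemma trace_coord1 A C : trace_coord A C 1%:M = 0.
Proof. by rewrite /trace_coord (@scalar_mx_block _ m r) block_mxKur mulmx0 mul0mx. Qed.

Lemma trace_coordM A C x y : block_ut x -> block_ut y ->
  A *m ulsubmx x = A -> drsubmx y *m C = C ->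
  trace_coord A C (x *m y) = trace_coord A C x + trace_coord A C y.
Proof.
move=> ux uy xA yC; rewrite /trace_coord (mul_block_ut ux uy) block_mxKur.
by rewrite mulmxDr mulmxDl mulmxA xA -!mulmxA yC addrC.
Qed.

Lemma mul3_block_ut m1 x m2 :
  block_ut m1 -> block_ut x -> block_ut m2 ->
  ulsubmx m1 *m ulsubmx x = ulsubmx m1 -> drsubmx x *m drsubmx m2 = drsubmx m2 ->
  m1 *m x *m m2 =
    block_mx (ulsubmx m1 *m ulsubmx m2)
      (ulsubmx m1 *m ursubmx m2 + trace_coord (ulsubmx m1) (drsubmx m2) x
         + ursubmx m1 *m drsubmx m2)
      0 (drsubmx m1 *m drsubmx m2).
Proof.
move=> u1 ux u2 xA xC; rewrite /trace_coord (mul_block_ut (block_utM u1 ux) u2).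
rewrite (mul_block_ut u1 ux) block_mxKul block_mxKur block_mxKdr xA.
by rewrite -mulmxA xC mulmxDl -!mulmxA xC addrA.
Qed.

End BlockUpperTriangular.

Section Trace.
Variables (K : pzRingType) (m r : nat) (M : 'M[K]_(m + r) -> Prop).
Hypothesis Mut : forall x, M x -> block_ut x.
Variables (A1 A2 : 'M[K]_m) (C1 C2 : 'M[K]_r).
Implicit Types x y : 'M[K]_(m + r).

Lemma trace_subP x : trace_sub M (A1, C1) (A2, C2) x ->
  [/\ block_ut x, A1 *m ulsubmx x = A1 & drsubmx x *m C2 = C2].
Proof. by case=> Mx [[xA _] [_ xC]]; split=> //; apply: Mut. Qed.

Lemma trace_coord_trace_subM x y :
  trace_sub M (A1, C1) (A2, C2) x -> trace_sub M (A1, C1) (A2, C2) y ->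
  trace_coord A1 C2 (x *m y) = trace_coord A1 C2 x + trace_coord A1 C2 y.
Proof.
by move=> /trace_subP[ux xA _] /trace_subP[uy _ yC]; apply: trace_coordM.
Qed.

Lemma mul3_trace_sub m1 x m2 : M m1 -> phi m1 = (A1, C1) ->
  M m2 -> phi m2 = (A2, C2) -> trace_sub M (A1, C1) (A2, C2) x ->
  m1 *m x *m m2 =
    block_mx (A1 *m A2) (A1 *m ursubmx m2 + trace_coord A1 C2 x + ursubmx m1 *m C2)
      0 (C1 *m C2).
Proof.
move=> Mm1 [pA1 pC1] Mm2 [pA2 pC2] /trace_subP[ux xA xC].
rewrite -pA1 -pC1 -pA2 -pC2 in xA xC *.
exact: mul3_block_ut (Mut Mm1) ux (Mut Mm2) xA xC.
Qed.

Lemma trace_coord_trace_equiv x y :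
  in_image M (A1, C1) -> in_image M (A2, C2) ->
  trace_sub M (A1, C1) (A2, C2) x -> trace_sub M (A1, C1) (A2, C2) y ->
  (trace_coord A1 C2 x = trace_coord A1 C2 y <-> trace_equiv M (A1, C1) (A2, C2) x y).
Proof.
move=> [m1 [Mm1 pm1]] [m2 [Mm2 pm2]] Tx Ty; split.
- move=> exy n1 n2 Mn1 pn1 Mn2 pn2.
  by rewrite (mul3_trace_sub Mn1 pn1 Mn2 pn2 Tx) (mul3_trace_sub Mn1 pn1 Mn2 pn2 Ty) exy.
- move=> /(_ m1 m2 Mm1 pm1 Mm2 pm2).
  rewrite (mul3_trace_sub Mm1 pm1 Mm2 pm2 Tx) (mul3_trace_sub Mm1 pm1 Mm2 pm2 Ty).
  by move/(congr1 ursubmx); rewrite !block_mxKur => /addIr /addrI.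
Qed.

End Trace.

Theorem lemma3p2 (K : pzRingType) (m r : nat) (M : 'M[K]_(m + r) -> Prop)
  (M1 : M 1%:M)
  (Mmul : forall x y, M x -> M y -> M (x *m y))
  (Mut : forall x, M x -> block_ut x)
  (n1 n2 : 'M[K]_m * 'M[K]_r)
  (hn1 : in_image M n1) (hn2 : in_image M n2) :
  exists f : 'M[K]_(m + r) -> 'M[K]_(m, r),
    [/\ f 1%:M = 0,
        (forall x y, trace_sub M n1 n2 x -> trace_sub M n1 n2 y ->
           f (x *m y) = f x + f y)
      & (forall x y, trace_sub M n1 n2 x -> trace_sub M n1 n2 y ->
           (f x = f y <-> trace_equiv M n1 n2 x y))].
Proof.
case: n1 hn1 => A1 C1 hn1; case: n2 hn2 => A2 C2 hn2.
exists (trace_coord A1 C2); split.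
- exact: trace_coord1.
- exact: trace_coord_trace_subM.
- by move=> x y; apply: trace_coord_trace_equiv.
Qed.
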